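(* Consider a stochastic mass-action reaction network as described in the context, with reactions partitioned into fast and slow ones and a finite accessible state space. Assume every fast component is strongly connected. Assume also that $\tilde n=A^fn$ takes a constant value $\tilde n^j$ on the $j$-th fast component, with distinct values on distinct components. Let $\pi_j$ be the unique invariant probability distribution of the fast dynamics on the $j$-th fast component. Set $L=\mathrm{diag}(\mathbf 1^T,\dots,\mathbf 1^T)$ and $\Pi=\mathrm{diag}(\pi_1,\dots,\pi_l)$. Then for $i\neq j$, $$(LK^s\Pi)_{ij}=\sum_{\ell\in S_{ij}}c_\ell\,E[h_\ell(n)\mid\tilde n=\tilde n^j]=\sum_{\ell\in S_{ij}}E[\mathcal R^s_\ell(n)\mid\tilde n=\tilde n^j].$$ Here $S_{ij}$ is the set of slow reactions that transform states of the $j$-th fast component into states of the $i$-th fast component. The conditional expectation is $E[f(n)\mid\tilde n=\tilde n^j]=\sum_{q}f(n^{j,q})\,\pi_{jq}$, where $n^{j,q}$ is the $q$-th state of the $j$-th fast component and $\pi_{jq}$ its invariant probability, i.e. $P(n=n^{j,q}\mid\tilde n=\tilde n^j)$.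
   Context: There are $m$ species and $r$ reactions. The state is $n\in\mathbb Z_{\ge0}^m$, the vector of molecule numbers. Reaction $\ell$ changes $n$ by the integer vector $\nu\mathcal E_{(\ell)}$, where $\nu$ is the $m\times p$ complex (stoichiometry) matrix and $\mathcal E_{(\ell)}$ is the $\ell$-th column of the $p\times r$ vertex-edge incidence matrix of the reaction graph. Reaction $\ell$ has stochastic mass-action rate (propensity) $\mathcal R_\ell(n)=c_\ell h_\ell(n)$, where $c_\ell>0$ is a rate constant and $h_\ell(n)=\prod_i\binom{n_i}{\nu_{i j(\ell)}}$, with $j(\ell)$ the reactant complex of reaction $\ell$. The reactions are split into fast and slow. $\mathcal R^s_\ell$ denotes the rate of a slow reaction, and $\mathcal E^f,\mathcal E^s$ denote the columns of $\mathcal E$ for fast and slow reactions. The finite accessible state space is ordered. $K^f$ (resp. $K^s$) is the transition matrix with, for states $p\neq q$, $(K)_{pq}$ equal to the sum of the rates $\mathcal R_\ell(q)$ of the fast (resp. slow) reactions $\ell$ with $p=q+\nu\mathcal E_{(\ell)}$. Its diagonal entries make the column sums zero. The fast components are the connected components of the fast-transition graph on states. Ordering states by component makes $K^f=\mathrm{diag}(K^f_1,\dots,K^f_l)$ block diagonal, and $K^s$ is partitioned conformally into blocks $K^s_{ij}$. $A^f$ is a matrix whose rows form a basis of $\mathcal N[(\nu\mathcal E^f)^T]$, so $\tilde n=A^fn$ is invariant under fast reactions. *)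

From HB Require Import structures.
From mathcomp Require Import all_boot all_order all_algebra.
Set Implicit Arguments. Unset Strict Implicit. Unset Printing Implicit Defensive.
Import Order.TTheory GRing.Theory Num.Theory.
Local Open Scope ring_scope.

(* Reaction graph on p complexes with r reactions: reaction l goes from the
   reactant complex [src l] to the product complex [tgt l]. *)
Definition incidence (p r : nat) (src tgt : 'I_r -> 'I_p) : 'M[int]_(p, r) :=
  \matrix_(k, l) ((nat_of_bool (k == tgt l))%:Z - (nat_of_bool (k == src l))%:Z).

Definition to_int (m : nat) (n : 'cV[nat]_m) : 'cV[int]_m :=
  map_mx (fun x : nat => x%:Z) n.

Definition reaction_vec (m p r : nat) (nu : 'M[nat]_(m, p))
  (src tgt : 'I_r -> 'I_p) (l : 'I_r) : 'cV[int]_m :=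
  map_mx (fun x : nat => x%:Z) nu *m col l (incidence src tgt).

Definition hprop (m p r : nat) (nu : 'M[nat]_(m, p)) (src : 'I_r -> 'I_p)
  (l : 'I_r) (n : 'cV[nat]_m) : nat :=
  (\prod_(i < m) 'C(n i ord0, nu i (src l)))%N.

Definition trans (m p r N : nat) (nu : 'M[nat]_(m, p)) (src tgt : 'I_r -> 'I_p)
  (st : 'I_N -> 'cV[nat]_m) (l : 'I_r) (q p' : 'I_N) : bool :=
  to_int (st p') == to_int (st q) + reaction_vec nu src tgt l.

Definition transK (R : ringType) (m p r N : nat) (nu : 'M[nat]_(m, p))
  (src tgt : 'I_r -> 'I_p) (c : 'I_r -> R) (st : 'I_N -> 'cV[nat]_m)
  (sel : pred 'I_r) : 'M[R]_N :=
  \matrix_(p', q)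
    if p' != q then
      \sum_(l | sel l && trans nu src tgt st l q p') c l * (hprop nu src l (st q))%:R
    else
      - \sum_(p'' | p'' != q)
          \sum_(l | sel l && trans nu src tgt st l q p'') c l * (hprop nu src l (st q))%:R.

Definition fast_edge (m p r N : nat) (nu : 'M[nat]_(m, p))
  (src tgt : 'I_r -> 'I_p) (st : 'I_N -> 'cV[nat]_m) (fast : pred 'I_r)
  : rel 'I_N :=
  fun q p' => (q != p') &&
    [exists l, [&& fast l, (0 < hprop nu src l (st q))%N & trans nu src tgt st l q p']].

(* the matrix nu E^f, written as an m x r matrix whose slow columns are zero
   (this does not change the null space of its transpose) *)
Definition nuEf (R : ringType) (m p r : nat) (nu : 'M[nat]_(m, p))
  (src tgt : 'I_r -> 'I_p) (fast : pred 'I_r) : 'M[R]_(m, r) :=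
  \matrix_(i, l) if fast l then ((reaction_vec nu src tgt l) i ord0)%:~R else 0.

(* L = diag(1^T, ..., 1^T) and Pi = diag(pi_1, ..., pi_l), with the states in
   their given order and block membership given by [comp] *)
Definition Lmat (R : ringType) (N nl : nat) (comp : 'I_N -> 'I_nl) : 'M[R]_(nl, N) :=
  \matrix_(i, q) (nat_of_bool (comp q == i))%:R.

Definition Pimat (R : ringType) (N nl : nat) (comp : 'I_N -> 'I_nl)
  (piv : 'I_N -> R) : 'M[R]_(N, nl) :=
  \matrix_(q, j) if comp q == j then piv q else 0.

Definition condE (R : ringType) (m N nl : nat) (st : 'I_N -> 'cV[nat]_m)
  (comp : 'I_N -> 'I_nl) (piv : 'I_N -> R) (j : 'I_nl) (f : 'cV[nat]_m -> R) : R :=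
  \sum_(q | comp q == j) f (st q) * piv q.

Definition Sij (m p r N nl : nat) (nu : 'M[nat]_(m, p))
  (src tgt : 'I_r -> 'I_p) (st : 'I_N -> 'cV[nat]_m) (fast : pred 'I_r)
  (comp : 'I_N -> 'I_nl) (i j : 'I_nl) (l : 'I_r) : bool :=
  ~~ fast l && [exists q, exists p', [&& comp q == j, comp p' == i,
        (0 < hprop nu src l (st q))%N & trans nu src tgt st l q p']].

From HB Require Import structures.
From mathcomp Require Import all_boot all_order all_algebra.
Import Order.TTheory GRing.Theory Num.Theory.
Local Open Scope ring_scope.

(* The columns of [L K^s Pi] restricted to component [j] are the column sums of
   [K^s] over the states of component [i], weighted by [pi_j].  A reaction
   fired from a state has a unique target state, and it shifts [A^f n] by the
   same vector from every state; since [A^f n] separates components, whether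
   the target lies in component [i] depends only on the reaction, and it does
   exactly for the reactions of [S_ij].  So each such column sum is the total
   rate of [S_ij] at that state (reactions with [h_l = 0] contribute nothing),
   and weighting by [pi_j] gives the conditional expectations. *)

Section ReactionSteps.

Variables (m p r N : nat) (nu : 'M[nat]_(m, p)) (src tgt : 'I_r -> 'I_p).
Variable st : 'I_N -> 'cV[nat]_m.

Lemma trans_map_mx (R : nzRingType) (l : 'I_r) (q p' : 'I_N) :
  trans nu src tgt st l q p' ->
  map_mx (fun x : nat => x%:R : R) (st p') =
  map_mx (fun x : nat => x%:R) (st q) +
  map_mx (fun z : int => z%:~R) (reaction_vec nu src tgt l).
Proof.
move/eqP=> step; apply/matrixP=> a b.
have := congr1 (fun M : 'cV[int]_m => (M a b)%:~R : R) step.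
by rewrite !mxE /= rmorphD.
Qed.

Lemma trans_injr (l : 'I_r) (q p1 p2 : 'I_N) : injective st ->
  trans nu src tgt st l q p1 -> trans nu src tgt st l q p2 -> p1 = p2.
Proof.
move=> st_inj /eqP step1 /eqP step2; apply: st_inj; apply/matrixP=> a b.
have := congr1 (fun M : 'cV[int]_m => M a b) (etrans step1 (esym step2)).
by rewrite !mxE => -[].
Qed.

Lemma trans_comp_congr (R : nzRingType) (nl k : nat) (comp : 'I_N -> 'I_nl)
    (A : 'M[R]_(k, m)) (nt : 'I_nl -> 'cV[R]_k) :
  (forall q, A *m map_mx (fun x : nat => x%:R) (st q) = nt (comp q)) ->
  injective nt ->
  forall (l : 'I_r) (q1 q2 p1 p2 : 'I_N), comp q1 = comp q2 ->
  trans nu src tgt st l q1 p1 -> trans nu src tgt st l q2 p2 ->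
  comp p1 = comp p2.
Proof.
move=> Ant nt_inj l q1 q2 p1 p2 cq step1 step2; apply: nt_inj.
rewrite -!Ant (trans_map_mx R _ _ _ step1) (trans_map_mx R _ _ _ step2) !mulmxDr.
by rewrite !Ant cq.
Qed.

Lemma transK_offdiag (R : nzRingType) (c : 'I_r -> R) (sel : pred 'I_r)
    (p' q : 'I_N) : p' != q ->
  transK nu src tgt c st sel p' q =
  \sum_(l | sel l && trans nu src tgt st l q p') c l * (hprop nu src l (st q))%:R.
Proof. by rewrite mxE => ->. Qed.

End ReactionSteps.

Arguments trans_map_mx {m p r N nu src tgt st} R {l q p'}.
Arguments trans_injr {m p r N nu src tgt st l q p1 p2}.
Arguments trans_comp_congr {m p r N nu src tgt st R nl k comp A nt} Ant nt_inj
  {l q1 q2 p1 p2}.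

Lemma Lmat_mul_Pimat (R : nzRingType) (N nl : nat) (comp : 'I_N -> 'I_nl)
    (piv : 'I_N -> R) (A : 'M[R]_N) (i j : 'I_nl) :
  (Lmat R comp *m A *m Pimat comp piv) i j =
  \sum_(q | comp q == j) (\sum_(p' | comp p' == i) A p' q) * piv q.
Proof.
rewrite mxE (bigID (fun q => comp q == j)) /= [X in _ + X]big1 ?addr0; last first.
  by move=> q /negbTE cq; rewrite [Pimat _ _ _ _]mxE cq mulr0.
apply: eq_bigr => q cq; rewrite [Pimat _ _ _ _]mxE cq; congr (_ * _).
rewrite mxE (bigID (fun p' => comp p' == i)) /= [X in _ + X]big1 ?addr0; last first.
  by move=> p' /negbTE cp; rewrite mxE cp mul0r.
by apply: eq_bigr => p' cp; rewrite mxE cp mul1r.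
Qed.

Section SlowColumnSums.

Variables (R : nzRingType) (m p r N nl k : nat) (nu : 'M[nat]_(m, p)).
Variables (src tgt : 'I_r -> 'I_p) (c : 'I_r -> R) (fast : pred 'I_r).
Variables (st : 'I_N -> 'cV[nat]_m) (comp : 'I_N -> 'I_nl).
Variables (A : 'M[R]_(k, m)) (nt : 'I_nl -> 'cV[R]_k).
Hypothesis st_inj : injective st.
Hypothesis closed : forall (l : 'I_r) (q : 'I_N),
  (0 < hprop nu src l (st q))%N -> exists p' : 'I_N, trans nu src tgt st l q p'.
Hypothesis Ant : forall q, A *m map_mx (fun x : nat => x%:R) (st q) = nt (comp q).
Hypothesis nt_inj : injective nt.

Let h l q : R := (hprop nu src l (st q))%:R.
Let S i j := Sij nu src tgt st fast comp i j.

Lemma slow_reaction_column_sum (i j : 'I_nl) (l : 'I_r) (q : 'I_N) :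
  ~~ fast l -> comp q = j -> (0 < hprop nu src l (st q))%N ->
  \sum_(p' | (comp p' == i) && (~~ fast l && trans nu src tgt st l q p')) c l * h l q
  = if S i j l then c l * h l q else 0.
Proof.
move=> slow cq hpos; have [p1 step1] := closed _ _ hpos.
case: ifPn => [|notS].
  case/andP=> _ /existsP[q0 /existsP[p0 /and4P[/eqP cq0 /eqP cp0 _ step0]]].
  have cp1 : comp p1 = i.
    by rewrite -cp0 (trans_comp_congr Ant nt_inj _ step1 step0) // cq cq0.
  rewrite (bigD1 p1) /=; last by rewrite cp1 eqxx slow step1.
  rewrite big1 ?addr0 // => p2 /andP[/andP[_ /andP[_ step2]] ne].
  by move: ne; rewrite (trans_injr st_inj step2 step1) eqxx.
rewrite big1 // => p2 /andP[/eqP cp2 /andP[_ step2]].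
case/negP: notS; rewrite /S /Sij slow /=.
by apply/existsP; exists q; apply/existsP; exists p2; rewrite cq cp2 !eqxx hpos step2.
Qed.

Lemma slow_column_sum (i j : 'I_nl) (q : 'I_N) : i != j -> comp q = j ->
  \sum_(p' | comp p' == i) transK nu src tgt c st (predC fast) p' q =
  \sum_(l | S i j l) c l * h l q.
Proof.
move=> nij cq.
rewrite (eq_bigr (fun p' => \sum_(l | ~~ fast l && trans nu src tgt st l q p')
  c l * h l q)); last first.
  by move=> p' /eqP cp; apply: transK_offdiag; apply: contra_neq nij => e;
     rewrite -cp e cq.
rewrite (exchange_big_dep (fun l => ~~ fast l)) /=; last by move=> ? ? _ /andP[].
rewrite [RHS](eq_bigl (fun l => ~~ fast l && S i j l)); last first.
  by move=> l; rewrite /S /Sij; case: (fast l).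
rewrite [RHS]big_mkcondr /=; apply: eq_bigr => l slow.
have [hpos|] := boolP (0 < hprop nu src l (st q))%N.
  exact: slow_reaction_column_sum.
rewrite lt0n negbK => /eqP h0; rewrite /h h0 mulr0 if_same.
by rewrite big1 // => ? _; rewrite /h h0 mulr0.
Qed.

End SlowColumnSums.

Arguments slow_column_sum {R m p r N nl k nu src tgt c} fast {st comp A nt}
  st_inj closed Ant nt_inj {i j q}.

Theorem theorem3 (R : realFieldType) (m p r : nat)
  (nu : 'M[nat]_(m, p)) (src tgt : 'I_r -> 'I_p)
  (Hgraph : forall l, src l != tgt l)
  (c : 'I_r -> R) (Hc : forall l, 0 < c l)
  (fast : pred 'I_r)
  (N : nat) (st : 'I_N -> 'cV[nat]_m) (Hst : injective st)
  (Hclosed : forall (l : 'I_r) (q : 'I_N), (0 < hprop nu src l (st q))%N ->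
      exists p' : 'I_N, trans nu src tgt st l q p')
  (nl : nat) (comp : 'I_N -> 'I_nl)
  (Hcomp : forall q p' : 'I_N, (comp q == comp p') =
      connect (fun x y => fast_edge nu src tgt st fast x y ||
                          fast_edge nu src tgt st fast y x) q p')
  (Hcomp_surj : forall j : 'I_nl, exists q : 'I_N, comp q = j)
  (Hstrong : forall q p' : 'I_N, comp q = comp p' ->
      connect (fast_edge nu src tgt st fast) q p')
  (k : nat) (Af : 'M[R]_(k, m))
  (HAf : row_free Af && (Af == kermx (nuEf R nu src tgt fast))%MS)
  (nt : 'I_nl -> 'cV[R]_k)
  (Hnt : forall q : 'I_N, Af *m map_mx (fun x : nat => x%:R) (st q) = nt (comp q))
  (Hnt_inj : injective nt)
  (piv : 'I_N -> R)
  (Hpiv_ge0 : forall q, 0 <= piv q)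
  (Hpiv_sum : forall j : 'I_nl, \sum_(q | comp q == j) piv q = 1)
  (Hpiv_inv : forall p' : 'I_N,
      \sum_(q | comp q == comp p') (transK nu src tgt c st fast) p' q * piv q = 0) :
  forall i j : 'I_nl, i != j ->
    (Lmat R comp *m transK nu src tgt c st (predC fast) *m Pimat comp piv) i j
      = \sum_(l | Sij nu src tgt st fast comp i j l)
          c l * condE st comp piv j (fun n => (hprop nu src l n)%:R)
    /\
    \sum_(l | Sij nu src tgt st fast comp i j l)
          c l * condE st comp piv j (fun n => (hprop nu src l n)%:R)
      = \sum_(l | Sij nu src tgt st fast comp i j l)
          condE st comp piv j (fun n => c l * (hprop nu src l n)%:R).
Proof.
move=> i j nij; split; last first.
  apply: eq_bigr => l _; rewrite /condE mulr_sumr.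
  by apply: eq_bigr => q _; rewrite mulrA.
rewrite Lmat_mul_Pimat.
under eq_bigr => q /eqP cq do
  rewrite (slow_column_sum fast Hst Hclosed Hnt Hnt_inj nij cq) mulr_suml.
rewrite exchange_big /=; apply: eq_bigr => l _.
by rewrite /condE mulr_sumr; apply: eq_bigr => q _; rewrite mulrA.
Qed.
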